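(* Let $(\Sigma,E)$ be an algebraic theory with free monad $(T,\eta,\mu)$, and let $\alpha:TX\to X$ be a $T$-semialgebra. Let $(X,I)$ be the $\Sigma^{\mathrm{s}}$-algebra with $I(\mathsf{a})=\alpha\circ\eta_X$ and $I(\mathsf{op})=\alpha\circ\mathsf{op}^{TX}\circ(\eta_X)^n$ for each $(\mathsf{op}:n)\in\Sigma$. Then for every $\Sigma$-term $t(v_1,\dots,v_n)$ over $\mathrm{Var}$ of depth at least $1$ and every assignment $\sigma:\mathrm{Var}\to X$, $I(t)_\sigma=\alpha\big(\mathsf{int}^{TX}(t)_{\eta_X\circ\sigma}\big)$.
   Context: $T=T_{\Sigma,E}$: $TX$ is the set of $\Sigma$-terms over $X$ modulo the smallest congruence containing substitution instances of $E$, a $(\Sigma,E)$-algebra via $\mathsf{op}^{TX}(\overline{t_1},\dots,\overline{t_n})=\overline{\mathsf{op}(t_1,\dots,t_n)}$; $\eta_X(x)=\overline{x}$; $\mu_X$ flattens terms. A $T$-semialgebra is $\alpha:TX\to X$ with $\alpha\circ\mu_X=\alpha\circ T\alpha$. $\Sigma^{\mathrm{s}}=\Sigma\uplus\{\mathsf{a}:1\}$. For a $\Sigma$- (or $\Sigma^{\mathrm{s}}$-) algebra $(X,I)$ and a function $f:\mathrm{Var}\to X$, $I(t)_f$ denotes the value of $t$: $I(v)_f=f(v)$, $I(\mathsf{op}(t_1,\dots,t_n))_f=I(\mathsf{op})(I(t_1)_f,\dots,I(t_n)_f)$; $\mathsf{int}^{TX}(t)_g$ denotes the analogous value in the algebra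 $(TX,\mathsf{op}^{TX})$ under $g:\mathrm{Var}\to TX$. Depth: variables depth $0$, constants depth $1$, $\mathsf{op}(t_1,\dots,t_n)$ depth $1+\max$. *)

From mathcomp Require Import all_boot.
Set Implicit Arguments. Unset Strict Implicit. Unset Printing Implicit Defensive.

Section Terms.
Variables (O : Type) (ar : O -> nat).

Inductive term (V : Type) : Type :=
| Var : V -> term V
| App : forall o : O, ('I_(ar o) -> term V) -> term V.

Arguments Var {V}.
Arguments App {V}.

Fixpoint depth V (t : term V) : nat :=
  match t with
  | Var _ => 0
  | App o ts => (\max_(i < ar o) depth (ts i)).+1
  end.

Fixpoint subst V W (g : V -> term W) (t : term V) : term W :=
  match t with
  | Var v => g v
  | App o ts => App o (fun i => subst g (ts i))
  end.

Definition tmap V W (f : V -> W) (t : term V) : term W := subst (fun v => Var (f v)) t.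

Definition join V (t : term (term V)) : term V := subst id t.

Inductive cong (Var0 : Type) (E : term Var0 -> term Var0 -> Prop) (X : Type)
  : term X -> term X -> Prop :=
| cong_refl t : cong E t t
| cong_sym t u : cong E t u -> cong E u t
| cong_trans t u w : cong E t u -> cong E u w -> cong E t w
| cong_ax (s : Var0 -> term X) l r : E l r -> cong E (subst s l) (subst s r)
| cong_app o (ts us : 'I_(ar o) -> term X) :
    (forall i, cong E (ts i) (us i)) -> cong E (App o ts) (App o us).

(* T-semialgebra alpha : TX -> X, with TX represented as term X modulo
   cong E: alpha respects the congruence, and alpha o mu = alpha o T alpha. *)
Definition semialgebra (Var0 : Type) (E : term Var0 -> term Var0 -> Prop)
  (X : Type) (alpha : term X -> X) : Prop :=
  (forall t u, cong E t u -> alpha t = alpha u) /\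
  (forall t : term (term X), alpha (join t) = alpha (tmap alpha t)).

(* The value int^{TX}(t)_g of t in the algebra (TX, op^{TX}), on representatives:
   op^{TX} (t_1..t_n) = op(t_1..t_n). *)
Fixpoint intTX V X (g : V -> term X) (t : term V) : term X :=
  match t with
  | Var v => g v
  | App o ts => App o (fun i => intTX g (ts i))
  end.

End Terms.

Arguments Var {O ar V}.
Arguments App {O ar V}.

(* Signature Sigma^s = Sigma + {a : 1}: None stands for the new symbol a. *)
Definition ar_s (O : Type) (ar : O -> nat) (o : option O) : nat :=
  match o with Some o' => ar o' | None => 1 end.

Definition interp_t (O : Type) (ar : O -> nat) (X : Type) :=
  forall o : O, ('I_(ar o) -> X) -> X.

Fixpoint eval (O : Type) (ar : O -> nat) (X V : Type) (I : interp_t ar X)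
  (f : V -> X) (t : term ar V) : X :=
  match t with
  | Var v => f v
  | App o ts => I o (fun i => eval I f (ts i))
  end.

Fixpoint embed_s (O : Type) (ar : O -> nat) (V : Type) (t : term ar V)
  : term (ar_s ar) V :=
  match t with
  | Var v => Var v
  | App o ts => @App _ (ar_s ar) _ (Some o) (fun i => embed_s (ts i))
  end.

(* The Sigma^s-algebra (X, I) induced by alpha:
   I(a) = alpha o eta_X, I(op) = alpha o op^{TX} o (eta_X)^n. *)
Definition semialg_interp (O : Type) (ar : O -> nat) (X : Type)
  (alpha : term ar X -> X) : interp_t (ar_s ar) X :=
  fun o => match o return ('I_(ar_s ar o) -> X) -> X with
  | Some o' => fun xs => alpha (App o' (fun i => Var (xs i)))
  | None => fun xs => alpha (Var (xs ord0))
  end.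

From mathcomp Require Import all_boot.
From Stdlib Require Import FunctionalExtensionality.

(* Applied to
   [eta (eta s)] it gives [alpha (eta (alpha s)) = alpha s], and applied to
   [op (eta t_1, ..., eta t_n)] it shows that [alpha (op (t_1, ..., t_n))]
   depends on the [t_i] only through the [alpha t_i].  Hence, by induction,
   [I(t)_sigma] and [alpha (int^{TX}(t)_{eta o sigma})] agree after one more
   application of [alpha o eta].  At depth at least 1 the outermost step of
   [I] is itself an application of [alpha], which absorbs that extra
   [alpha o eta]; for a variable the identity fails in general, since
   [alpha o eta] need not be the identity for a semialgebra. *)

Section SemialgebraInterp.
Variables (O : Type) (ar : O -> nat) (X : Type) (alpha : term ar X -> X).
Hypothesis alpha_join : forall t : term ar (term ar X),
  alpha (join t) = alpha (tmap alpha t).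

Lemma alpha_VarK (s : term ar X) : alpha (Var (alpha s)) = alpha s.
Proof. exact: esym (alpha_join (Var s)). Qed.

Lemma alpha_App_congr o (ts us : 'I_(ar o) -> term ar X) :
  (forall i, alpha (ts i) = alpha (us i)) -> alpha (App o ts) = alpha (App o us).
Proof.
move=> alpha_tsus.
have alpha_App_Var vs : alpha (App o vs) = alpha (App o (fun i => Var (alpha (vs i)))).
  exact: alpha_join (App o (fun i => Var (vs i))).
rewrite alpha_App_Var [RHS]alpha_App_Var.
by congr (alpha (App o _)); apply: functional_extensionality => i; rewrite alpha_tsus.
Qed.

Variables (V : Type) (sigma : V -> X).
Local Notation evalI t := (eval (semialg_interp alpha) sigma (embed_s t)).
Local Notation intTX_eta t := (intTX (fun v => Var (sigma v)) t).

Lemma alpha_Var_eval (t : term ar V) : alpha (Var (evalI t)) = alpha (intTX_eta t).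
Proof.
elim: t => [v|o ts IHts] //=.
by rewrite alpha_VarK; apply: alpha_App_congr.
Qed.

Lemma eval_embed_App o (ts : 'I_(ar o) -> term ar V) :
  evalI (App o ts) = alpha (intTX_eta (App o ts)).
Proof. by apply: alpha_App_congr => i; apply: alpha_Var_eval. Qed.

End SemialgebraInterp.

Theorem lemma9 (O : Type) (ar : O -> nat) (Var0 : Type)
  (E : term ar Var0 -> term ar Var0 -> Prop)
  (X : Type) (alpha : term ar X -> X) (Halpha : semialgebra E alpha)
  (t : term ar Var0) (Ht : 1 <= depth t) (sigma : Var0 -> X) :
  eval (semialg_interp alpha) sigma (embed_s t)
  = alpha (intTX (fun v => Var (sigma v)) t).
Proof.
case: Halpha => _ alpha_join.
case: t Ht => [//|o ts] _.
exact: eval_embed_App.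
Qed.
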